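(* Let $G$ be a graph without isolated vertices. Then $\partial\Gamma(G)=2$ if and only if either $G$ is the complete bipartite graph $K_{n,m}$ for some $n\ge 2$ and $m\ge 1$, or $G$ is a disjoint union of copies of $K_2$ (i.e. every component is a single edge).
   Context: A proper $k$-coloring of $G$ is a surjective map $c:V(G)\to\{1,\ldots,k\}$ with $c(u)\ne c(v)$ for every edge $uv$. A vertex of color $i$ is a Grundy vertex if it has, for every $j<i$, a neighbor of color $j$. A partial Grundy $k$-coloring is a proper $k$-coloring in which every color class contains at least one Grundy vertex; $\partial\Gamma(G)$ is the largest $k$ such that $G$ has a partial Grundy $k$-coloring. *)

From mathcomp Require Import all_boot.
Set Implicit Arguments. Unset Strict Implicit. Unset Printing Implicit Defensive.

Definition simple_graph (T : finType) (e : rel T) : Prop :=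
  symmetric e /\ irreflexive e.

Definition no_isolated (T : finType) (e : rel T) : Prop :=
  forall v : T, exists u : T, e v u.

Definition proper_coloring (T : finType) (e : rel T) (k : nat) (c : T -> nat) : Prop :=
  [/\ forall v, 1 <= c v <= k,
      forall i, 1 <= i <= k -> exists v, c v = i
    & forall u v, e u v -> c u <> c v].

Definition grundy_vertex (T : finType) (e : rel T) (c : T -> nat) (v : T) : Prop :=
  forall j, 1 <= j < c v -> exists u, e v u /\ c u = j.

Definition partial_grundy_coloring (T : finType) (e : rel T) (k : nat) (c : T -> nat) : Prop :=
  proper_coloring e k c /\
  forall i, 1 <= i <= k -> exists v, c v = i /\ grundy_vertex e c v.

Definition has_partial_grundy (T : finType) (e : rel T) (k : nat) : Prop :=
  exists c : T -> nat, partial_grundy_coloring e k c.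

Definition partial_grundy_number_is (T : finType) (e : rel T) (k : nat) : Prop :=
  has_partial_grundy e k /\ forall k', has_partial_grundy e k' -> k' <= k.

Definition is_complete_bipartite_n2_m1 (T : finType) (e : rel T) : Prop :=
  exists A : {set T},
    [/\ 2 <= #|A|, 1 <= #|~: A| & forall u v, e u v = ((u \in A) != (v \in A))].

Definition is_union_of_K2 (T : finType) (e : rel T) : Prop :=
  forall v : T, exists u : T, e v u /\ [set w | connect e v w] = [set v; u].

(* A partial Grundy 3-colouring needs a vertex of colour 3 seeing colours 1 and 2,
   and a Grundy vertex of colour 2 seeing colour 1.  The first is impossible when
   every vertex has at most one neighbour; in a complete bipartite graph each colour
   class lies in one side, so colours 1 and 2 would share the side opposite to the
   colour-3 vertex, and no edge could join them.  Conversely, take a partial Grundy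
   2-colouring, i.e. a bipartition, of a graph admitting no partial Grundy
   3-colouring.  If some vertex v has two neighbours x1, x2, then every vertex y on
   the side of v is adjacent to x2: otherwise recolouring v's side into 2 and 3
   (3 for the neighbours of x2) and the other side into 1 and 2 (2 for x2 alone)
   gives a partial Grundy 3-colouring.  Spreading this along neighbours forces the
   graph to be complete bipartite; if no vertex has two neighbours, it is a
   perfect matching. *)
From mathcomp Require Import all_boot zify.
Set Implicit Arguments. Unset Strict Implicit. Unset Printing Implicit Defensive.

Section PartialGrundy.

Variables (T : finType) (e : rel T).

Definition bipartition (f : T -> bool) := forall u v, e u v -> f u != f v.

Definition degree_le1 := forall v a b, e v a -> e v b -> a = b.

Lemma proper2_bipartition c :
  proper_coloring e 2 c -> bipartition (fun w => c w == 1).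
Proof.
case=> crange _ cprop u v /cprop; have := crange u; have := crange v.
by case: eqP; case: eqP => //; lia.
Qed.

Lemma partial_grundy2_of_bipartition f a b :
  bipartition f -> e a b -> has_partial_grundy e 2.
Proof.
move=> Hf Hab; have Nab := Hf a b Hab.
pose c w := if f w == f a then 2 else 1.
have ca : c a = 2 by rewrite /c eqxx.
have cb : c b = 1 by rewrite /c eq_sym (negbTE Nab).
exists c; split; [split|].
- by move=> w; rewrite /c; case: eqP.
- move=> i Hi; have [->|->] : i = 1 \/ i = 2 by lia.
  + by exists b.
  + by exists a.
- move=> u v /Hf; rewrite /c.
  by case: (f u); case: (f v); case: (f a).
- move=> i Hi; have [->|->] : i = 1 \/ i = 2 by lia.
  + by exists b; split=> // j; rewrite cb; lia.
  + by exists a; split=> // j; rewrite ca => Hj; exists b; split=> //; lia.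
Qed.

Lemma degree_le1_partial_grundy_le2 k :
  degree_le1 -> has_partial_grundy e k -> k <= 2.
Proof.
move=> Hdeg [c [_ Hg]]; rewrite leqNgt; apply/negP => Hk.
have [w [cw Gw]] := Hg 3 (ltac:(lia)).
have [u1 [Hu1 cu1]] := Gw 1 (ltac:(lia)).
have [u2 [Hu2 cu2]] := Gw 2 (ltac:(lia)).
by move: cu1; rewrite (Hdeg _ _ _ Hu1 Hu2) cu2.
Qed.

Lemma complete_bipartite_partial_grundy_le2 (f : T -> bool) k :
  (forall u v, e u v = (f u != f v)) -> has_partial_grundy e k -> k <= 2.
Proof.
move=> He [c [[_ _ cprop] Hg]]; rewrite leqNgt; apply/negP => Hk.
have same_side u v : c u = c v -> f u = f v.
  move=> Euv; apply/eqP/negPn/negP => Nuv.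
  by apply: (cprop u v) => //; rewrite He.
have [w [cw Gw]] := Hg 3 (ltac:(lia)).
have [u1 [Hu1 cu1]] := Gw 1 (ltac:(lia)).
have [u2 [Hu2 cu2]] := Gw 2 (ltac:(lia)).
have [z [cz Gz]] := Hg 2 (ltac:(lia)).
have [z1 [Hz1 cz1]] := Gz 1 (ltac:(lia)).
move: Hu1 Hu2 Hz1; rewrite !He -(same_side u1 z1) ?cu1 ?cz1 //.
by rewrite -(same_side u2 z) ?cu2 ?cz //; case: (f w); case: (f u1); case: (f u2).
Qed.

Hypotheses (esym : symmetric e) (eirr : irreflexive e) (Hni : no_isolated e).

Lemma union_of_K2E : is_union_of_K2 e <-> degree_le1.
Proof.
split=> [HK v a b Ha Hb | Hdeg v].
  have [u [_ Hcomp]] := HK v.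
  have nbr x : e v x -> x = u.
    move=> Hx; have : x \in [set w | connect e v w] by rewrite inE connect1.
    by rewrite Hcomp !inE => /orP [/eqP Exv|/eqP //]; rewrite Exv eirr in Hx.
  by rewrite (nbr a Ha) (nbr b Hb).
have [u Hvu] := Hni v; exists u; split=> //.
have Huv : e u v by rewrite esym.
apply/setP=> w; rewrite !inE; apply/idP/idP; last first.
  by case/orP=> /eqP ->; [exact: connect0 | exact: connect1].
case/connectP=> p; elim: p v u Hvu Huv => [|y p IHp] v u Hvu Huv //= => [_ ->|].
  by rewrite eqxx.
case/andP=> Hvy Hp Ew; rewrite (Hdeg _ _ _ Hvy Hvu) in Hp Ew.
by rewrite orbC; apply: IHp Hp Ew.
Qed.

Lemma degree_le1_bipartition :
  degree_le1 -> bipartition (fun w => [exists u, e w u && (enum_rank u < enum_rank w)]).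
Proof.
move=> Hdeg a b Hab.
have side x y : e x y ->
    [exists u, e x u && (enum_rank u < enum_rank x)] = (enum_rank y < enum_rank x).
  move=> Hxy; apply/existsP/idP => [[u /andP [Hxu]]|]; last by exists y; rewrite Hxy.
  by rewrite (Hdeg _ _ _ Hxu Hxy).
rewrite (side a b Hab) (side b a (etrans (esym b a) Hab)).
case: ltngtP => // /ord_inj /enum_rank_inj Eab.
by rewrite Eab eirr in Hab.
Qed.

Lemma partial_grundy3_of_cherry f v x1 x2 y :
  bipartition f -> f v -> f y -> e v x1 -> e v x2 -> x1 != x2 -> ~~ e x2 y ->
  has_partial_grundy e 3.
Proof.
move=> Hf fv fy Hx1 Hx2 N12 Nx2y.
have fx1 : f x1 = false by move: (Hf _ _ Hx1); rewrite fv; case: (f x1).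
have fx2 : f x2 = false by move: (Hf _ _ Hx2); rewrite fv; case: (f x2).
pose c w := if f w then (if e x2 w then 3 else 2) else (if w == x2 then 2 else 1).
have cx1 : c x1 = 1 by rewrite /c fx1 (negbTE N12).
have cx2 : c x2 = 2 by rewrite /c fx2 eqxx.
have cv : c v = 3 by rewrite /c fv esym Hx2.
have cy : c y = 2 by rewrite /c fy (negbTE Nx2y).
have prop_from_side a b : e a b -> f a -> c a <> c b.
  move=> Hab fa; have fb : f b = false by move: (Hf _ _ Hab); rewrite fa; case: (f b).
  rewrite /c fa fb; case: eqP => [Eb|_]; last by case: ifP.
  by rewrite -Eb esym Hab.
exists c; split; [split|].
- by move=> w; rewrite /c; case: ifP => _; case: ifP.
- move=> i Hi; have [->|[->|->]] : i = 1 \/ i = 2 \/ i = 3 by lia.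
  + by exists x1.
  + by exists x2.
  + by exists v.
- move=> a b Hab; case fa: (f a); first exact: prop_from_side.
  have fb : f b by move: (Hf _ _ Hab); rewrite fa; case: (f b).
  by move=> Eab; apply: (prop_from_side b a) => //; rewrite esym.
- move=> i Hi; have [->|[->|->]] : i = 1 \/ i = 2 \/ i = 3 by lia.
  + by exists x1; split=> // j; rewrite cx1; lia.
  + exists y; split=> // j; rewrite cy => Hj; have [u Hyu] := Hni y.
    exists u; split=> //; have -> : j = 1 by lia.
    have fu : f u = false by move: (Hf _ _ Hyu); rewrite fy; case: (f u).
    rewrite /c fu; case: eqP => // Eu.
    by move: Nx2y; rewrite -Eu esym Hyu.
  + exists v; split=> // j; rewrite cv => Hj.
    have [->|->] : j = 1 \/ j = 2 by lia.
    * by exists x1.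
    * by exists x2.
Qed.

Section NoPartialGrundy3.

Variable f : T -> bool.
Hypotheses (Hf : bipartition f) (No3 : ~ has_partial_grundy e 3).

Lemma cherry_leaf_adj v x1 x2 y :
  e v x1 -> e v x2 -> x1 != x2 -> f y = f v -> e x2 y.
Proof.
move=> Hx1 Hx2 N12 fy; apply/negPn/negP => Nx2y; apply: No3.
apply: (@partial_grundy3_of_cherry (fun w => f w == f v) v x1 x2 y) => //.
- by move=> a b /Hf; case: (f a); case: (f b); case: (f v).
- exact/eqP.
Qed.

Lemma cherry_complete_bipartite v x1 x2 x y :
  e v x1 -> e v x2 -> x1 != x2 -> f x != f v -> f y = f v -> e x y.
Proof.
move=> Hx1 Hx2 N12 fx fy.
have [z Hxz] := Hni x.
have fz : f z = f v by move: (Hf Hxz) fx; case: (f x); case: (f z); case: (f v).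
have Hzx1 : e z x1 by rewrite esym; apply: (cherry_leaf_adj Hx2 Hx1) => //; rewrite eq_sym.
have Hzx2 : e z x2 by rewrite esym; apply: (cherry_leaf_adj Hx1 Hx2).
have fyz : f y = f z by rewrite fy fz.
have [->|Nx] := eqVneq x x1; first by apply: (cherry_leaf_adj Hzx2 Hzx1) => //; rewrite eq_sym.
by apply: (cherry_leaf_adj Hzx1 _ _ fyz); rewrite 1?esym 1?eq_sym.
Qed.

Lemma cherry_is_complete_bipartite v x1 x2 :
  e v x1 -> e v x2 -> x1 != x2 -> is_complete_bipartite_n2_m1 e.
Proof.
move=> Hx1 Hx2 N12.
have opp x : e v x -> f x != f v by move=> /Hf; rewrite eq_sym.
exists [set w | f w != f v]; split.
- apply: leq_trans (subset_leq_card (_ : [set x1; x2] \subset _)).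
    by rewrite cards2 N12.
  apply/subsetP => w.
  by rewrite !inE => /orP [] /eqP ->; apply: opp.
- by rewrite card_gt0; apply/set0Pn; exists v; rewrite !inE eqxx.
- move=> a b; rewrite !inE.
  have [fa|fa] := eqVneq (f a) (f v); have [fb|fb] := eqVneq (f b) (f v) => /=.
  + by apply/negP => /Hf; rewrite fa fb eqxx.
  + by rewrite esym; apply: (cherry_complete_bipartite Hx1 Hx2).
  + exact: (cherry_complete_bipartite Hx1 Hx2).
  + apply/negP => /Hf; move: fa fb.
    by case: (f a); case: (f b); case: (f v).
Qed.

Lemma no_partial_grundy3_classification :
  is_complete_bipartite_n2_m1 e \/ degree_le1.
Proof.
case: (boolP [exists v, exists x1, exists x2, [&& e v x1, e v x2 & x1 != x2]]).
  case/existsP=> v /existsP [x1 /existsP [x2 /and3P [Hx1 Hx2 N12]]].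
  by left; apply: cherry_is_complete_bipartite Hx1 Hx2 N12.
move=> Ncherry; right => v a b Ha Hb; apply/eqP; apply: contraNT Ncherry => Nab.
by apply/existsP; exists v; apply/existsP; exists a; apply/existsP; exists b; rewrite Ha Hb.
Qed.

End NoPartialGrundy3.

End PartialGrundy.

Theorem mainTheorem4 (T : finType) (e : rel T) :
  simple_graph e -> 0 < #|T| -> no_isolated e ->
  (partial_grundy_number_is e 2 <->
   (is_complete_bipartite_n2_m1 e \/ is_union_of_K2 e)).
Proof.
move=> [esym eirr] HT Hni; rewrite union_of_K2E //; split.
- move=> [[c [Hc _]] Hmax].
  apply: (no_partial_grundy3_classification esym Hni (proper2_bipartition Hc)).
  by move/Hmax.
- case=> [[A [HA HcA He]] | Hdeg]; split.
  + have [a Ha] : exists a, a \in A by apply/set0Pn; rewrite -card_gt0; lia.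
    have [b Hb] : exists b, b \in ~: A by apply/set0Pn; rewrite -card_gt0.
    apply: (@partial_grundy2_of_bipartition _ _ (mem A) a b).
      by move=> u v; rewrite He.
    by rewrite He Ha; rewrite inE in Hb.
  + by move=> k; apply: complete_bipartite_partial_grundy_le2 He.
  + have [v _] := card_gt0P HT; have [u Hvu] := Hni v.
    exact: partial_grundy2_of_bipartition (degree_le1_bipartition esym eirr Hdeg) Hvu.
  + by move=> k; apply: degree_le1_partial_grundy_le2.
Qed.
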